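(* Let $G$ be a group with finite generating set $S$ that contains an element $g$ of infinite order in its center such that $G/\langle g\rangle$ is not a torsion group. Then there is a snake embedding from $(\mathbb{Z}^2,\{a,b\})$ into $(G,S\cup\{g\})$, where $\{a,b\}$ is the standard generating set of $\mathbb{Z}^2$.
   Context: A group is torsion if every element has finite order. An invertible-reversible transducer is a tuple $\mathcal M=(Q,S',T',q_0,\delta,\eta)$ with $Q$ a finite set of states, $q_0\in Q$, $\delta:Q\times S'\to Q$, $\eta:Q\times S'\to T'$ with $\eta(q,\cdot)$ injective for every $q$, and such that for all $q\in Q$, $s\in S'$ there is a unique $q'$ with $\delta(q',s)=q$. One extends by $\eta(q,s^{-1})=\eta(q',s)^{-1}$ and $\delta(q,s^{-1})=q'$ where $\delta(q',s)=q$. For a word $w$, $q_w$ is the state reached from $q_0$ after reading $w$, and $f_{\mathcal M}(\epsilon)=\epsilon$, $f_{\mathcal M}(ws^{\pm1})=f_{\mathcal M}(w)\eta(q_w,s^{\pm1})$. For groups $(K,S')$, $(H,T')$ with finite generating sets, a map $\phi:K\to H$ is a snake embedding if there is such a transducer with $\phi(k)=\overline{f_{\mathcal M}(w)}$ for every word $w$ over $S'\cup S'^{-1}$ representing $k$, and $f_{\mathcal M}(w)=_H f_{\mathcal M}(w')$ iff $w=_K w'$. *)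

From mathcomp Require Import all_boot all_order all_algebra.
From Stdlib Require List.
Set Implicit Arguments. Unset Strict Implicit. Unset Printing Implicit Defensive.
Import GRing.Theory.

Record group := Group {
  gcar :> Type;
  gmul : gcar -> gcar -> gcar;
  gone : gcar;
  ginv : gcar -> gcar;
  gmulA : forall x y z, gmul x (gmul y z) = gmul (gmul x y) z;
  gmul1 : forall x, gmul gone x = x;
  gmulV : forall x, gmul (ginv x) x = gone }.

Section GroupDefs.
Variable G : group.

Fixpoint gpow (x : G) (n : nat) : G :=
  if n is m.+1 then @gmul G x (gpow x m) else @gone G.

Definition gpowz (x : G) (z : int) : G :=
  match z with
  | Posz n => gpow x n
  | Negz n => gpow (@ginv G x) n.+1
  end.

(** Formal words over an alphabet [A] together with the inverse letters:
    a letter is [(s, false)] for [s] and [(s, true)] for [s^-1]. *)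
Definition letter_val (A : Type) (v : A -> G) (l : A * bool) : G :=
  if l.2 then @ginv G (v l.1) else v l.1.

Definition eval_word (A : Type) (v : A -> G) (w : seq (A * bool)) : G :=
  foldr (fun l acc => @gmul G (letter_val v l) acc) (@gone G) w.

Definition generates (S : seq G) : Prop :=
  forall x : G, exists w : seq (G * bool),
    (forall l, List.In l w -> List.In l.1 S) /\ eval_word id w = x.
End GroupDefs.

(** Invertible-reversible transducers with input alphabet [I] (a finite
    type, naming the generators of K) and outputs in the group H. *)
Section Transducer.
Variables (I Q : finType) (H : group).
Variables (q0 : Q) (delta : Q -> I -> Q) (eta : Q -> I -> H).

(** delta(q, s^-1) = the q' with delta(q', s) = q (unique under reversibility) *)
Definition delta_inv (q : Q) (s : I) : Q := odflt q [pick q' | delta q' s == q].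

Definition tstep (p : Q * seq (H * bool)) (l : I * bool) : Q * seq (H * bool) :=
  let: (q, out) := p in
  if l.2 then let q' := delta_inv q l.1 in (q', rcons out (eta q' l.1, true))
  else (delta q l.1, rcons out (eta q l.1, false)).

Definition f_M (w : seq (I * bool)) : seq (H * bool) := (foldl tstep (q0, [::]) w).2.
End Transducer.

Definition snake_embedding (K : group) (I : finType) (vK : I -> K)
    (H : group) (T : seq H) (phi : K -> H) : Prop :=
  exists (Q : finType) (q0 : Q) (delta : Q -> I -> Q) (eta : Q -> I -> H),
    [/\ (forall q s, List.In (eta q s) T),
        (forall q, injective (eta q)),
        (forall q s, exists! q', delta q' s = q),
        (forall w : seq (I * bool),
            phi (eval_word vK w) = eval_word id (f_M q0 delta eta w)) &
        (forall w w' : seq (I * bool),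
            eval_word id (f_M q0 delta eta w) = eval_word id (f_M q0 delta eta w')
            <-> eval_word vK w = eval_word vK w')].

Definition Z2add (x y : int * int) : int * int := (x.1 + y.1, x.2 + y.2)%R.
Definition Z2opp (x : int * int) : int * int := (- x.1, - x.2)%R.

Lemma Z2addA x y z : Z2add x (Z2add y z) = Z2add (Z2add x y) z.
Proof. by rewrite /Z2add /= !addrA. Qed.
Lemma Z2add0 x : Z2add (0, 0)%R x = x.
Proof. by case: x => a b; rewrite /Z2add /= !add0r. Qed.
Lemma Z2addN x : Z2add (Z2opp x) x = (0, 0)%R.
Proof. by rewrite /Z2add /Z2opp /= !addNr. Qed.

Definition Z2 : group := Group Z2addA Z2add0 Z2addN.

(** false = a, true = b *)
Definition Z2gen (s : bool) : Z2 := if s then (0, 1)%R else (1, 0)%R.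

From mathcomp Require Import all_boot all_order all_algebra zify.
From Stdlib Require Import Classical.
Set Implicit Arguments. Unset Strict Implicit. Unset Printing Implicit Defensive.
Import Order.TTheory GRing.Theory.

(* Call x torsion modulo <g> if some positive power of x lies in <g>.  If every
   generator in S were torsion modulo <g>, then every inverse letter would be
   congruent modulo <g> to a positive power of its generator, so every element
   would be congruent to a positive word whose letters are torsion modulo <g>,
   and G/<g> would be torsion.  Hence some positive word over S is not torsion
   modulo <g>; let y be a shortest one, of length k.  Reading y periodically
   gives a bi-infinite walk m |-> walk m in G, and (m, n) |-> g^n walk m is
   computed by the transducer with states Z/k that outputs the current letter
   of y and advances on a, and outputs g on b.  As g is central of infinite
   order, injectivity reduces to: walk m and walk m' are not congruent modulo
   <g> when m < m'.  Writing m' - m = qk + t with t < k, such a congruence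
   makes a power y^p conjugate modulo <g> to 1 (if t = 0) or to the value of
   the k - t letters following position m + t, a positive word shorter than
   y and hence torsion modulo <g>; either way y would be torsion modulo <g>. *)

Local Notation "x ** y" := (gmul x y) (at level 40, left associativity).

Section GroupTheory.
Variable G : group.
Implicit Types x y z : G.
Local Notation one := (@gone G).

Lemma gmulgV x : x ** ginv x = one.
Proof.
have VVx : ginv (ginv x) ** ginv x = one := gmulV _.
by rewrite -{1}(gmul1 (x ** ginv x)) -{1}VVx -gmulA (gmulA (ginv x)) gmulV gmul1.
Qed.

Lemma gmulg1 x : x ** one = x.
Proof. by rewrite -(gmulV x) gmulA gmulgV gmul1. Qed.

Lemma gmulKg x y : ginv x ** (x ** y) = y.
Proof. by rewrite gmulA gmulV gmul1. Qed.

Lemma gmulgK x y : x ** y ** ginv y = x.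
Proof. by rewrite -gmulA gmulgV gmulg1. Qed.

Lemma gmulgKV x y : x ** ginv y ** y = x.
Proof. by rewrite -gmulA gmulV gmulg1. Qed.

Lemma gmulgI z : injective (@gmul G z).
Proof. by move=> x y /(congr1 (@gmul G (ginv z))); rewrite !gmulKg. Qed.

Lemma gmulIg z : injective ((@gmul G)^~ z).
Proof. by move=> x y /(congr1 ((@gmul G)^~ (ginv z))); rewrite !gmulgK. Qed.

Lemma gpowSr x n : gpow x n.+1 = gpow x n ** x.
Proof.
elim: n => [|n IHn]; first by rewrite /= gmulg1 gmul1.
by rewrite -[gpow x n.+2]/(x ** gpow x n.+1) {1}IHn gmulA.
Qed.

Lemma gpowD x a b : gpow x (a + b) = gpow x a ** gpow x b.
Proof. by elim: a => [|a IHa] /=; rewrite ?gmul1 // IHa gmulA. Qed.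

Lemma gpowM x a b : gpow x (a * b) = gpow (gpow x a) b.
Proof. by elim: b => [|b IHb]; rewrite ?muln0 // mulnS gpowD IHb. Qed.

Lemma gpowVK x n : gpow (ginv x) n ** gpow x n = one.
Proof.
elim: n => [|n IHn]; first by rewrite /= gmulg1.
by rewrite [gpow x n.+1]gpowSr gmulA -(gmulA (ginv x)) IHn gmulg1 gmulV.
Qed.

Lemma gpow_commute x y n : x ** y = y ** x -> gpow x n ** y = y ** gpow x n.
Proof.
move=> xy; elim: n => [|n IHn] /=; first by rewrite gmul1 gmulg1.
by rewrite -gmulA IHn !gmulA xy.
Qed.

Lemma gpowMc x y n : x ** y = y ** x -> gpow (x ** y) n = gpow x n ** gpow y n.
Proof.
move=> xy; elim: n => [|n IHn] /=; first by rewrite gmulg1.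
by rewrite IHn -!gmulA (gmulA y) -(gpow_commute n xy) !gmulA.
Qed.

Lemma gpowzS x (m : int) : gpowz x (m + 1) = gpowz x m ** x.
Proof.
case: m => [n|[|n]].
- by rewrite /= addn1 -gpowSr.
- by rewrite /= gmulg1 gmulV.
- have -> : (Negz n.+1 + 1)%R = Negz n by lia.
  by rewrite -[gpowz x (Negz n.+1)]/(gpow (ginv x) n.+2) gpowSr gmulgKV.
Qed.

Lemma gpowzDn x (m : int) a : gpowz x (m + a%:Z) = gpowz x m ** gpow x a.
Proof.
elim: a => [|a IHa]; first by rewrite addr0 gmulg1.
by rewrite -addn1 PoszD addrA gpowzS IHa addn1 gpowSr gmulA.
Qed.

Definition prodl (s : seq G) : G := foldr (@gmul G) one s.

Lemma prodl_cat s1 s2 : prodl (s1 ++ s2) = prodl s1 ** prodl s2.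
Proof. by elim: s1 => [|x s IHs] /=; rewrite ?gmul1 // IHs gmulA. Qed.

Lemma prodl_rcons s x : prodl (rcons s x) = prodl s ** x.
Proof. by rewrite -cats1 prodl_cat /= gmulg1. Qed.

Lemma prodl_nseq n x : prodl (nseq n x) = gpow x n.
Proof. by elim: n => //= n ->. Qed.

Lemma eval_word_rcons (A : Type) (v : A -> G) w l :
  eval_word v (rcons w l) = eval_word v w ** letter_val v l.
Proof. by elim: w => [|l' w IHw] /=; rewrite ?gmulg1 ?gmul1 // IHw gmulA. Qed.

End GroupTheory.

Section ListIn.
Variable T : Type.
Implicit Types (x : T) (s : seq T).

Lemma In_nth x0 s i : (i < size s)%N -> List.In (nth x0 s i) s.
Proof. by elim: s i => [|x s IHs] [|i] //= lt_i; [left | right; exact: IHs]. Qed.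

Lemma incl_nseq n x s : List.In x s -> List.incl (nseq n x) s.
Proof. by move=> xs; elim: n => [|n IHn] //=; apply: List.incl_cons. Qed.

Lemma incl_cat s1 s2 s : List.incl s1 s -> List.incl s2 s -> List.incl (s1 ++ s2) s.
Proof. by move=> s1s s2s x /List.in_app_iff [/s1s|/s2s]. Qed.

Lemma incl_mkseq (f : nat -> T) n s :
  (forall i, List.In (f i) s) -> List.incl (mkseq f n) s.
Proof.
move=> fs x; rewrite /mkseq; elim: (iota 0 n) => [|i r IHr] //= [<-|]; [exact: fs | exact: IHr].
Qed.

End ListIn.

Lemma ex_minimal (T : Type) (f : T -> nat) (P : T -> Prop) :
  (exists x, P x) -> exists x, P x /\ forall x', (f x' < f x)%N -> ~ P x'.
Proof.
move=> [x Px]; apply: NNPP => no_min.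
suff no_P n x' : (f x' < n)%N -> ~ P x' by exact: no_P _ x (ltnSn _) Px.
elim: n x' => [|n IHn] x' // lt_n Px'.
apply: no_min; exists x'; split=> // x'' lt_x'; apply: IHn; lia.
Qed.

Section TransducerTheory.
Variables (I Q : finType) (H : group) (q0 : Q).
Variables (delta : Q -> I -> Q) (eta : Q -> I -> H).
Hypothesis delta_bij : forall s, bijective (delta^~ s).

Lemma delta_invK q s : delta_inv delta (delta q s) s = q.
Proof.
rewrite /delta_inv; case: pickP => [q' /eqP /(bij_inj (delta_bij s)) //|].
by move/(_ q); rewrite eqxx.
Qed.

Lemma delta_preimage q s : exists! q', delta q' s = q.
Proof.
have [f deltaK fK] := delta_bij s.
by exists (f q); split=> [|q' <-]; [exact: fK | exact: deltaK].
Qed.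

Variables (K : group) (vK : I -> K) (st : K -> Q) (phi : K -> H).
Hypotheses (st1 : st (@gone K) = q0) (phi1 : phi (@gone K) = @gone H).
Hypothesis stM : forall x s, st (x ** vK s) = delta (st x) s.
Hypothesis phiM : forall x s, phi (x ** vK s) = phi x ** eta (st x) s.

(* Reversibility makes the conditions on positive letters suffice for inverse
   letters as well. *)
Lemma transducer_run w :
  let: (q, out) := foldl (tstep delta eta) (q0, [::]) w in
  q = st (eval_word vK w) /\ eval_word id out = phi (eval_word vK w).
Proof.
elim/last_ind: w => [|w [s []] IHw] /=; first by rewrite st1 phi1.
all: rewrite foldl_rcons eval_word_rcons; case: foldl IHw => q out [-> IHout].
all: rewrite /= eval_word_rcons IHout /letter_val /=.
- rewrite -[eval_word vK w](gmulgKV _ (vK s)); move: (_ ** ginv _) => x.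
  by rewrite gmulgK stM phiM delta_invK gmulgK.
- by rewrite stM phiM.
Qed.

Lemma eval_f_M w : eval_word id (f_M q0 delta eta w) = phi (eval_word vK w).
Proof. by rewrite /f_M; have := transducer_run w; case: foldl => q out []. Qed.

Lemma transducer_snake_embedding (T : seq H) :
  (forall q s, List.In (eta q s) T) -> (forall q, injective (eta q)) ->
  injective phi -> snake_embedding vK T phi.
Proof.
move=> etaT eta_inj phi_inj; exists Q, q0, delta, eta; split=> //.
- exact: delta_preimage.
- by move=> w; rewrite eval_f_M.
- by move=> w w'; rewrite !eval_f_M; split=> [/phi_inj|->].
Qed.

End TransducerTheory.

Section CentralElement.
Variables (G : group) (g : G).
Hypothesis g_central : forall x : G, g ** x = x ** g.
Implicit Types x y z b v : G.
Local Notation one := (@gone G).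

Lemma gpow_central a x : gpow g a ** x = x ** gpow g a.
Proof. exact: gpow_commute. Qed.

Definition eqmod x y := exists a b : nat, x ** gpow g a = y ** gpow g b.

Definition torsion_mod x := exists2 n, (0 < n)%N & eqmod (gpow x n) one.

Lemma eqmod_refl x : eqmod x x.
Proof. by exists 0%N, 0%N. Qed.

Lemma eqmod_sym x y : eqmod x y -> eqmod y x.
Proof. by move=> [a [b e]]; exists b, a. Qed.

Lemma eqmod_trans x y z : eqmod x y -> eqmod y z -> eqmod x z.
Proof.
move=> [a [b xy]] [c [d yz]]; exists (a + c)%N, (d + b)%N.
by rewrite !gpowD gmulA xy -gmulA -gpowD addnC gpowD gmulA yz gmulA.
Qed.

Lemma eqmod_mul x y x' y' : eqmod x y -> eqmod x' y' -> eqmod (x ** x') (y ** y').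
Proof.
move=> [a [b xy]] [a' [b' xy']]; exists (a' + a)%N, (b' + b)%N.
rewrite !gpowD -!gmulA (gmulA x') xy' -(gpow_central a) (gmulA x) xy.
by rewrite -!gmulA (gmulA _ y') (gpow_central b) -!gmulA -!gpowD addnC.
Qed.

Lemma eqmod_mulIg z x y : eqmod (x ** z) (y ** z) -> eqmod x y.
Proof.
move=> [a [b e]]; exists a, b; apply: (@gmulIg _ z).
by rewrite -!gmulA !(gpow_central _ z) !gmulA.
Qed.

Lemma eqmod_pow n x y : eqmod x y -> eqmod (gpow x n) (gpow y n).
Proof.
move=> [a [b e]]; exists (a * n)%N, (b * n)%N.
have comm u c : u ** gpow g c = gpow g c ** u by rewrite gpow_central.
by rewrite !gpowM -(gpowMc n (comm x a)) -(gpowMc n (comm y b)) e.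
Qed.

Lemma eqmod_gpowz (m : int) x : eqmod (gpowz g m ** x) x.
Proof.
case: m => n; first by exists 0%N, n; rewrite gmulg1 gpow_central.
exists n.+1, 0%N; rewrite -[gpowz g (Negz n)]/(gpow (ginv g) n.+1).
by rewrite gmulg1 -gmulA -gpow_central gmulA gpowVK gmul1.
Qed.

Lemma eqmod_inv_pow n x : eqmod (gpow x n.+1) one -> eqmod (ginv x) (gpow x n).
Proof.
move=> [a [b e]]; exists b, a.
by rewrite -(gmul1 (gpow g b)) -e -!gmulA gmulKg.
Qed.

Lemma torsion_mod1 : torsion_mod one.
Proof. by exists 1%N => //=; rewrite gmul1; exact: eqmod_refl. Qed.

Lemma eqmod_torsion_mod x y : eqmod x y -> torsion_mod y -> torsion_mod x.
Proof. by move=> xy [n n_gt0 yn]; exists n => //; exact: eqmod_trans (eqmod_pow n xy) yn. Qed.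

Lemma torsion_mod_pow p x : (0 < p)%N -> torsion_mod (gpow x p) -> torsion_mod x.
Proof. by move=> p_gt0 [n n_gt0 xpn]; exists (p * n)%N; rewrite ?muln_gt0 ?p_gt0 // gpowM. Qed.

Lemma eqmod_intertwine_pow n x b v :
  eqmod (x ** b) (b ** v) -> eqmod (gpow x n ** b) (b ** gpow v n).
Proof.
move=> xb; elim: n => [|n IHn] /=; first by rewrite gmul1 gmulg1; exact: eqmod_refl.
apply: (@eqmod_trans _ (x ** (b ** gpow v n))).
  by rewrite -gmulA; apply: eqmod_mul (eqmod_refl x) IHn.
by rewrite gmulA (gmulA b); apply: eqmod_mul xb (eqmod_refl _).
Qed.

Lemma torsion_mod_intertwine x b v :
  eqmod (x ** b) (b ** v) -> torsion_mod v -> torsion_mod x.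
Proof.
move=> xb [n n_gt0 vn]; exists n => //; apply: (@eqmod_mulIg b).
apply: eqmod_trans (eqmod_intertwine_pow n xb) _.
by rewrite gmul1 -[b in eqmod _ b]gmulg1; apply: eqmod_mul (eqmod_refl b) vn.
Qed.

Lemma torsion_mod_gpowz x :
  torsion_mod x -> exists n (m : int), (0 < n)%N /\ gpow x n = gpowz g m.
Proof.
move=> [n n_gt0 [a [b e]]]; exists n, (b%:Z - a%:Z)%R; split=> //.
by apply: (@gmulIg _ (gpow g a)); rewrite e gmul1 -gpowzDn subrK.
Qed.

Lemma eqmod_positive_word (S : seq G) (w : seq (G * bool)) :
  (forall s, List.In s S -> torsion_mod s) ->
  (forall l, List.In l w -> List.In l.1 S) ->
  exists2 u, List.incl u S & eqmod (eval_word id w) (prodl u).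
Proof.
move=> S_tor; elim: w => [|[s inv_s] w IHw] wS /=.
  by exists [::]; [exact: List.incl_nil_l | exact: eqmod_refl].
have sS : List.In s S := wS (s, inv_s) (or_introl erefl).
have [u uS wu] := IHw (fun l lw => wS l (or_intror lw)).
rewrite /letter_val /=; clear wS; case: inv_s.
- have [[|n] // _ sn] := S_tor s sS.
  exists (nseq n s ++ u); first by apply: incl_cat (incl_nseq sS) uS.
  by rewrite prodl_cat prodl_nseq; apply: eqmod_mul (eqmod_inv_pow sn) wu.
- exists (s :: u); first exact: List.incl_cons.
  exact: eqmod_mul (eqmod_refl s) wu.
Qed.

Lemma exists_minimal_nontorsion_word (S : seq G) :
  generates S -> (exists x, ~ torsion_mod x) ->
  exists y : seq G, [/\ List.incl y S, ~ torsion_mod (prodl y) &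
    forall z : seq G, List.incl z S -> (size z < size y)%N -> torsion_mod (prodl z)].
Proof.
move=> genS [x x_nt].
have [|y [[yS y_nt] y_min]] := @ex_minimal _ size
  (fun z : seq G => List.incl z S /\ ~ torsion_mod (prodl z)).
  apply: NNPP => no_word.
  have tor u : List.incl u S -> torsion_mod (prodl u).
    by move=> uS; apply: NNPP => u_nt; apply: no_word; exists u.
  have [w [wS wx]] := genS x.
  have [|u uS wu] := eqmod_positive_word (S := S) _ wS.
    by move=> s sS; have := tor [:: s]; rewrite /= gmulg1; apply=> t [<-|].
  by apply: x_nt; rewrite -wx; apply: eqmod_torsion_mod wu (tor u uS).
exists y; split=> // z zS lt_zy; apply: NNPP => z_nt.
exact: y_min lt_zy (conj zS z_nt).
Qed.

Hypothesis g_infinite : forall n : nat, (0 < n)%N -> gpow g n <> one.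

Lemma gpow_inj : injective (gpow g).
Proof.
suff lt_neq (a b : nat) : (a < b)%N -> gpow g a <> gpow g b.
  move=> a b e; case: (ltngtP a b) => // lt.
  - by case: (lt_neq _ _ lt e).
  - by case: (lt_neq _ _ lt (esym e)).
move=> lt_ab; rewrite -(subnKC (ltnW lt_ab)) gpowD -{1}[gpow g a]gmulg1 => /gmulgI.
by move/esym; apply: g_infinite; rewrite subn_gt0.
Qed.

Lemma gpowz_inj : injective (gpowz g).
Proof.
move=> m m' e; set a := (absz m + absz m')%N.
have := congr1 ((@gmul G)^~ (gpow g a)) e; rewrite /= -!gpowzDn.
have -> : (m + a%:Z = (absz (m + a%:Z))%:Z)%R by lia.
have -> : (m' + a%:Z = (absz (m' + a%:Z))%:Z)%R by lia.
move/gpow_inj; lia.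
Qed.


Section MinimalWord.
Variables S y : seq G.
Hypothesis y_over : List.incl y S.
Hypothesis y_nontorsion : ~ torsion_mod (prodl y).
Hypothesis y_minimal :
  forall z : seq G, List.incl z S -> (size z < size y)%N -> torsion_mod (prodl z).
Local Notation k := (size y).
Local Open Scope ring_scope.

Lemma size_y_gt0 : (0 < k)%N.
Proof. by case: y y_nontorsion => // /(_ torsion_mod1). Qed.

Fact modk_subproof (m : int) : (absz (m %% k)%Z < k)%N.
Proof. by have := size_y_gt0; lia. Qed.

Definition modk (m : int) : 'I_k := Ordinal (modk_subproof m).

Lemma absz_modk m : (absz (m %% k)%Z)%:Z = (m %% k)%Z.
Proof. by have := size_y_gt0; rewrite /=; lia. Qed.

Lemma modkS m : modk (m + 1) = ordS (modk m).
Proof.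
by apply: val_inj; rewrite /= -modzDml -[in LHS](absz_modk m) addrC -intS modz_nat.
Qed.

Definition letter (m : int) : G := nth g y (absz (m %% k)%Z).

Lemma letter_In m : List.In (letter m) y.
Proof. exact: In_nth (modk_subproof m). Qed.

Lemma letter_ord (q : 'I_k) : letter q = nth g y q.
Proof. by rewrite /letter modz_nat modn_small. Qed.

Lemma letterDk m : letter (m + k%:Z) = letter m.
Proof. by rewrite /letter modzDr. Qed.

(* [walk m] multiplies the letters at positions 0, ..., m - 1 of the periodic
   word, or the inverses of those at positions m, ..., -1 when m < 0. *)
Fixpoint walk_nat (n : nat) : G := if n is j.+1 then walk_nat j ** letter j else one.
Fixpoint walk_neg (n : nat) : G :=
  if n is j.+1 then walk_neg j ** ginv (letter (- j.+1%:Z)) else one.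
Definition walk (m : int) : G :=
  match m with Posz n => walk_nat n | Negz n => walk_neg n.+1 end.

Lemma walkS m : walk (m + 1) = walk m ** letter m.
Proof.
case: m => [n|[|n]].
- by rewrite /= addn1.
- by rewrite /= gmul1 gmulV.
- have -> : Negz n.+1 + 1 = Negz n by lia.
  by rewrite /= NegzE gmulgKV.
Qed.

Definition block (m : int) (L : nat) : seq G := mkseq (fun i => letter (m + i%:Z)) L.

Lemma block_over m L : List.incl (block m L) S.
Proof. by apply: List.incl_tran y_over; apply: incl_mkseq => i; exact: letter_In. Qed.

Lemma walkD m L : walk (m + L%:Z) = walk m ** prodl (block m L).
Proof.
elim: L => [|L IHL]; first by rewrite addr0 gmulg1.
by rewrite /block mkseqS prodl_rcons -addn1 PoszD addrA walkS IHL gmulA.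
Qed.

Lemma block0k : block 0 k = y.
Proof.
apply: (@eq_from_nth _ g); rewrite ?size_mkseq // => i lt_ik.
by rewrite nth_mkseq // add0r (letter_ord (Ordinal lt_ik)).
Qed.

Lemma walk_period m : walk (m + k%:Z) = prodl y ** walk m.
Proof.
have stepP n : walk (n + 1 + k%:Z) = prodl y ** walk (n + 1) <->
               walk (n + k%:Z) = prodl y ** walk n.
  rewrite addrAC !walkS letterDk gmulA.
  by split=> [/gmulIg|->].
elim/int_rect: m => [|n IHn|n IHn].
- by rewrite add0r -[k%:Z]add0r walkD block0k /= gmulg1 gmul1.
- by rewrite -addn1 PoszD; apply/stepP.
- by apply/stepP; have -> : - n.+1%:Z + 1 = - n%:Z by lia.
Qed.

Lemma walk_period_mul m q : walk (m + (q * k)%N%:Z) = gpow (prodl y) q ** walk m.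
Proof.
elim: q => [|q IHq]; first by rewrite mul0n addr0 gmul1.
by rewrite mulSn PoszD addrCA addrC walk_period IHq gmulA.
Qed.

Lemma walk_eqmod_lt m m' : m < m' -> ~ eqmod (walk m) (walk m').
Proof.
move=> lt_mm' walk_mm'; apply: y_nontorsion.
have [q [t [lt_tk em']]] : exists q t, (t < k)%N /\ m' = m + t%:Z + (q * k)%N%:Z.
  exists (absz (m' - m) %/ k)%N, (absz (m' - m) %% k)%N; split; first exact: ltn_pmod size_y_gt0.
  by have := divn_eq (absz (m' - m)) k; lia.
have walk_m' : walk m' = gpow (prodl y) q ** walk (m + t%:Z) by rewrite em' walk_period_mul.
suff [p p_gt0 [v v_tor]] : exists2 p, (0 < p)%N & exists2 v, torsion_mod v &
    eqmod (gpow (prodl y) p ** walk (m + t%:Z)) (walk (m + t%:Z) ** v).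
  by move=> yp; exact: torsion_mod_pow p_gt0 (torsion_mod_intertwine yp v_tor).
case: (posnP t) => [t0 | t_gt0].
- move: em' walk_m' walk_mm'; rewrite t0 addr0 => em' -> walk_mm'.
  exists q.
    by rewrite lt0n; apply: contraTneq lt_mm' => q0; rewrite em' q0 mul0n addr0 ltxx.
  by exists one; [exact: torsion_mod1 | rewrite gmulg1; exact: eqmod_sym].
- exists q.+1 => //; exists (prodl (block (m + t%:Z) (k - t))).
    by apply: y_minimal; [exact: block_over | rewrite size_mkseq; lia].
  have -> : gpow (prodl y) q.+1 ** walk (m + t%:Z) = prodl y ** walk m'.
    by rewrite walk_m' gmulA.
  rewrite -walkD -addrA -PoszD subnKC ?(ltnW lt_tk) // walk_period.
  by apply: eqmod_mul (eqmod_refl _) (eqmod_sym walk_mm').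
Qed.

Lemma walk_eqmod_inj m m' : eqmod (walk m) (walk m') -> m = m'.
Proof.
move=> walk_mm'; case: (ltgtP m m') => // [/walk_eqmod_lt | /walk_eqmod_lt] walk_neq.
  by case: (walk_neq walk_mm').
by case: (walk_neq (eqmod_sym walk_mm')).
Qed.

Lemma nth_neq_g (q : 'I_k) : nth g y q <> g.
Proof.
rewrite -letter_ord => qg; suff /eqP : q%:Z + 1 = q by rewrite -subr_eq0 addrC addKr.
apply: walk_eqmod_inj; rewrite walkS qg -g_central.
by have := eqmod_gpowz 1 (walk q); rewrite /= gmulg1.
Qed.

Definition snake (v : Z2) : G := gpowz g v.2 ** walk v.1.
Definition snake_state (v : Z2) : 'I_k := modk v.1.
Definition snake_delta (q : 'I_k) (s : bool) : 'I_k := if s then q else ordS q.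
Definition snake_eta (q : 'I_k) (s : bool) : G := if s then g else nth g y q.

Lemma snake_inj : injective snake.
Proof.
move=> [m n] [m' n']; rewrite /snake /= => e.
have mm' : m = m'.
  apply: walk_eqmod_inj; apply: eqmod_trans (eqmod_sym (eqmod_gpowz n _)) _.
  by rewrite e; exact: eqmod_gpowz.
by move: e; rewrite mm' => /gmulIg /gpowz_inj ->.
Qed.

Lemma snake_embedding_Z2 : snake_embedding Z2gen (g :: S) snake.
Proof.
apply: (@transducer_snake_embedding _ _ _ (modk 0) snake_delta snake_eta _ _ _ snake_state).
- by move=> [] /=; [exists id | exact: ordS_bij].
- by [].
- by rewrite /snake /= gmul1.
- by move=> [m n] []; rewrite /snake_state /Z2add /= ?addr0 // modkS.
- move=> [m n] []; rewrite /snake /Z2add /= ?addr0.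
    by rewrite gpowzS -!gmulA g_central.
  by rewrite walkS /letter gmulA.
- move=> q [] /=; [by left | right; apply: y_over; exact: In_nth].
- by move=> q [] [] //= e; [case: (nth_neq_g (esym e)) | case: (nth_neq_g e)].
- exact: snake_inj.
Qed.

End MinimalWord.

End CentralElement.

Theorem lemma2 (G : group) (S : seq G) (g : G) :
  generates S ->
  (forall x : G, @gmul G g x = @gmul G x g) ->
  (forall n : nat, (0 < n)%N -> gpow g n <> @gone G) ->
  (exists x : G, forall n : nat, (0 < n)%N -> forall m : int, gpow x n <> gpowz g m) ->
  exists phi : Z2 -> G, snake_embedding Z2gen (g :: S) phi.
Proof.
move=> genS g_central g_infinite [x x_nontorsion].
have [|y [y_over y_nontorsion y_minimal]] := exists_minimal_nontorsion_word g_central genS.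
  exists x => /torsion_mod_gpowz [n [m [n_gt0 xn]]].
  exact: x_nontorsion n_gt0 m xn.
exists (snake g y).
exact: (snake_embedding_Z2 g_central g_infinite y_over y_nontorsion y_minimal).
Qed.
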